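(* Let $\mathcal K$ be a tame topological Kuranishi atlas and let $(I,x),(J,y)$ with $x\in U_I$, $y\in U_J$. The following are equivalent: (1) $(I,x)\sim(J,y)$ in the equivalence relation defining $|\mathcal K|$; (2) $I\cup J\in\mathcal I_{\mathcal K}$, $x\in U_{I(I\cup J)}$, $y\in U_{J(I\cup J)}$ and $\phi_{I(I\cup J)}(x)=\phi_{J(I\cup J)}(y)$; (3) either $I\cap J\neq\emptyset$ and there is $w\in U_{(I\cap J)I}\cap U_{(I\cap J)J}$ with $\phi_{(I\cap J)I}(w)=x$ and $\phi_{(I\cap J)J}(w)=y$, or $I\cap J=\emptyset$, $\mathfrak s_I(x)=0_I(x)$, $\mathfrak s_J(y)=0_J(y)$ and $\psi_I(x)=\psi_J(y)$. The analogous equivalences hold for $(I,e),(J,f)$ with $e\in\mathbb E_I$, $f\in\mathbb E_J$ and the relation defining $|\mathbf E_{\mathcal K}|$, with $\phi$ replaced by $\widehat\Phi$ and domains $U_{\bullet\bullet}$ replaced by $\mathrm{pr}_\bullet^{-1}(U_{\bullet\bullet})$, where in the case $I\cap J=\emptyset$ the condition is that $e=\mathfrak s_I(x)=0_I(x)$ and $f=\mathfrak s_J(y)=0_J(y)$ for some $x\in U_I$, $y\in U_J$ with $\psi_I(x)=\psi_J(y)$. Moreover, for each $I\in\mathcal I_{\mathcal K}$ the maps $\pi_{\mathcal K}|_{U_I}:U_I\to|\mathcal K|$ and $\pi_{\mathbf E_{\mathcal K}}|_{\mathbb E_I}:\mathbb E_I\to|\mathbf E_{\mathcal K}|$ are 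injective.
   Context: $X$ is a compact metrizable space. Charts: a topological Kuranishi chart for $X$ with open footprint $F\subset X$ is a tuple $\mathbf K=(U,\mathbb E,\mathfrak s,\psi)$ where $U$ is a separable, locally compact, metrizable space; $\mathbb E$ is a separable, locally compact, metrizable space with continuous maps $\mathrm{pr}:\mathbb E\to U$ and $0:U\to\mathbb E$ with $\mathrm{pr}\circ0=\mathrm{id}_U$; $\mathfrak s:U\to\mathbb E$ is continuous with $\mathrm{pr}\circ\mathfrak s=\mathrm{id}_U$; and $\psi$ is a homeomorphism from $\mathfrak s^{-1}(0):=\{x\in U:\mathfrak s(x)=0(x)\}$ onto $F$. Coordinate changes: for charts $\mathbf K_I,\mathbf K_J$ with $F_I\cap F_J\neq\emptyset$, a coordinate change $\widehat\Phi_{IJ}:\mathbf K_I\to\mathbf K_J$ consists of an open set $U_{IJ}\subset U_I$ with $U_{IJ}\cap\mathfrak s_I^{-1}(0_I)=\psi_I^{-1}(F_I\cap F_J)$ and a topological embedding $\widehat\Phi_{IJ}:\mathrm{pr}_I^{-1}(U_{IJ})\to\mathbb E_J$ such that there is a topological embedding $\phi_{IJ}:U_{IJ}\to U_J$ with $\mathrm{pr}_J\circ\widehat\Phi_{IJ}=\phi_{IJ}\circ\mathrm{pr}_I$, $0_J\circ\phi_{IJ}=\widehat\Phi_{IJ}\circ0_I$ and $\mathfrak s_J\circ\phi_{IJ}=\widehat\Phi_{IJ}\circ\mathfrak s_I$ on $U_{IJ}$, and $\phi_{IJ}=\psi_J^{-1}\circ\psi_I$ on $U_{IJ}\cap\mathfrak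 s_I^{-1}(0_I)$. Atlases: a covering family of basic charts is a finite family $(\mathbf K_i)_{i=1,\dots,N}$ of charts whose footprints cover $X$; $\mathcal I_{\mathcal K}$ is the set of nonempty $I\subset\{1,\dots,N\}$ with $F_I:=\bigcap_{i\in I}F_i\neq\emptyset$. Transition data consist of a chart $\mathbf K_J$ with footprint $F_J$ for each $J\in\mathcal I_{\mathcal K}$ with $|J|\ge2$ (and $\mathbf K_{\{i\}}:=\mathbf K_i$), and a coordinate change $\widehat\Phi_{IJ}:\mathbf K_I\to\mathbf K_J$ for all $I\subsetneq J$ in $\mathcal I_{\mathcal K}$. We set $U_{II}:=U_I$, $\phi_{II}:=\mathrm{id}_{U_I}$, $\widehat\Phi_{II}:=\mathrm{id}_{\mathbb E_I}$. For $I\subsetneq J\subsetneq K$ let $U_{IJK}:=U_{IJ}\cap\phi_{IJ}^{-1}(U_{JK})$. The triple satisfies the weak cocycle condition if $\widehat\Phi_{JK}\circ\widehat\Phi_{IJ}=\widehat\Phi_{IK}$ on $\mathrm{pr}_I^{-1}(U_{IJK}\cap U_{IK})$; the cocycle condition if in addition $U_{IJK}\subset U_{IK}$; the strong cocycle condition if in addition $U_{IJK}=U_{IK}$. A weak topological Kuranishi atlas $\mathcal K$ is a covering family with transition data satisfying the weak cocycle condition for all such triples; a topological Kuranishi atlas is one satisfying the cocycle condition for all triples. Filtrations: a weak topological Kuranishi atlas is filtered if it is equipped with closed subsets $\mathbb E_{IJ}\subset\mathbb E_J$ for all $J\in\mathcal I_{\mathcal K}$ and $I\subset J$ (including $I=\emptyset$)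 such that (i) $\mathbb E_{JJ}=\mathbb E_J$ and $\mathbb E_{\emptyset J}=\mathrm{im}\,0_J$; (ii) $\widehat\Phi_{JK}(\mathrm{pr}_J^{-1}(U_{JK})\cap\mathbb E_{IJ})=\mathbb E_{IK}\cap\mathrm{pr}_K^{-1}(\mathrm{im}\,\phi_{JK})$ for $I\subset J\subsetneq K$; (iii) $\mathbb E_{IJ}\cap\mathbb E_{HJ}=\mathbb E_{(I\cap H)J}$ for $I,H\subset J$; (iv) $\mathrm{im}\,\phi_{IJ}$ is an open subset of $\mathfrak s_J^{-1}(\mathbb E_{IJ})$ for $I\subsetneq J$. Tameness: a filtered weak topological Kuranishi atlas is tame if $U_{IJ}\cap U_{IK}=U_{I(J\cup K)}$ for all $I,J,K\in\mathcal I_{\mathcal K}$ with $I\subset J,K$ (where $U_{IL}:=\emptyset$ if $L\notin\mathcal I_{\mathcal K}$), and $\phi_{IJ}(U_{IK})=U_{JK}\cap\mathfrak s_J^{-1}(\mathbb E_{IJ})$ for all $I\subset J\subset K$ in $\mathcal I_{\mathcal K}$ (equalities of indices allowed). Virtual neighbourhood: for a topological Kuranishi atlas, $|\mathcal K|$ is the quotient of $\bigsqcup_{I\in\mathcal I_{\mathcal K}}U_I=\{(I,x):x\in U_I\}$ by the equivalence relation generated by $(I,x)\sim(J,\phi_{IJ}(x))$ for $I\subset J$, $x\in U_{IJ}$, with the quotient topology and projection $\pi_{\mathcal K}$; similarly $|\mathbf E_{\mathcal K}|$ is the quotient of $\bigsqcup_I\mathbb E_I$ by the relation generated by $(I,e)\sim(J,\widehat\Phi_{IJ}(e))$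 for $e\in\mathrm{pr}_I^{-1}(U_{IJ})$, with projection $\pi_{\mathbf E_{\mathcal K}}$. *)

From Stdlib Require Import Reals List Relations.
From HB Require Import structures.
From mathcomp Require Import all_boot.
Set Implicit Arguments.
Unset Strict Implicit.
Unset Printing Implicit Defensive.

Definition is_topology (T : Type) (op : (T -> Prop) -> Prop) : Prop :=
  op (fun _ => True) /\ op (fun _ => False) /\
  (forall A B, op A -> op B -> op (fun x => A x /\ B x)) /\
  (forall Fam : (T -> Prop) -> Prop,
      (forall A, Fam A -> op A) -> op (fun x => exists A, Fam A /\ A x)).

Record topspace := TopSpace {
  pt :> Type;
  opn : (pt -> Prop) -> Prop;
  opn_topology : is_topology opn }.

Definition closed (T : topspace) (A : T -> Prop) : Prop :=
  opn (fun x => ~ A x).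

Definition open_in (T : topspace) (S A : T -> Prop) : Prop :=
  (forall x, A x -> S x) /\
  exists V, opn V /\ forall x, S x -> (A x <-> V x).

Definition continuous_on (T T' : topspace) (f : T -> T') (S : T -> Prop) : Prop :=
  forall V, opn V -> exists W, opn W /\ forall x, S x -> (V (f x) <-> W x).

Definition continuous (T T' : topspace) (f : T -> T') : Prop :=
  continuous_on f (fun _ => True).

Definition embedding_on (T T' : topspace) (f : T -> T') (S : T -> Prop) : Prop :=
  (forall x y, S x -> S y -> f x = f y -> x = y) /\
  continuous_on f S /\
  (forall W, opn W -> exists V, opn V /\ forall x, S x -> (W x <-> V (f x))).

Definition homeo_onto (T T' : topspace) (f : T -> T') (S : T -> Prop) (B : T' -> Prop) : Prop :=
  embedding_on f S /\ (forall x, S x -> B (f x)) /\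
  (forall b, B b -> exists x, S x /\ f x = b).

Definition compact_subset (T : topspace) (K : T -> Prop) : Prop :=
  forall C : (T -> Prop) -> Prop,
    (forall A, C A -> opn A) ->
    (forall x, K x -> exists A, C A /\ A x) ->
    exists l : list (T -> Prop),
      (forall A, List.In A l -> C A) /\
      (forall x, K x -> exists A, List.In A l /\ A x).

Definition compact_space (T : topspace) : Prop := compact_subset (fun _ : T => True).

Definition is_metric (T : Type) (d : T -> T -> R) : Prop :=
  (forall x y, Rle R0 (d x y)) /\
  (forall x y, d x y = R0 <-> x = y) /\
  (forall x y, d x y = d y x) /\
  (forall x y z, Rle (d x z) (Rplus (d x y) (d y z))).

Definition metric_open (T : Type) (d : T -> T -> R) (A : T -> Prop) : Prop :=
  forall x, A x -> exists r, Rlt R0 r /\ forall y, Rlt (d x y) r -> A y.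

Definition metrizable (T : topspace) : Prop :=
  exists d : T -> T -> R, is_metric d /\ forall A, opn A <-> metric_open d A.

Definition countable_subset (T : Type) (D : T -> Prop) : Prop :=
  exists g : T -> nat, forall x y, D x -> D y -> g x = g y -> x = y.

Definition separable (T : topspace) : Prop :=
  exists D : T -> Prop, countable_subset D /\
    forall V, opn V -> (exists x, V x) -> exists x, V x /\ D x.

Definition locally_compact (T : topspace) : Prop :=
  forall x : T, exists V K : T -> Prop,
    opn V /\ V x /\ (forall y, V y -> K y) /\ compact_subset K.

Definition sep_lc_metrizable (T : topspace) : Prop :=
  separable T /\ locally_compact T /\ metrizable T.

Record chart_data (X : Type) := ChartData {
  cU : topspace;
  cE : topspace;
  pr : cE -> cU;
  zero : cU -> cE;
  sec : cU -> cE;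
  psi : cU -> X }.         (* footprint map, relevant on the zero set *)

Arguments cU {X}. Arguments cE {X}. Arguments pr {X}. Arguments zero {X}.
Arguments sec {X}. Arguments psi {X}.

Definition zset (X : Type) (K : chart_data X) (x : cU K) : Prop :=
  sec K x = zero K x.

Definition is_chart (X : topspace) (K : chart_data X) (F : X -> Prop) : Prop :=
  sep_lc_metrizable (cU K) /\ sep_lc_metrizable (cE K) /\
  continuous (pr K) /\ continuous (zero K) /\ continuous (sec K) /\
  (forall x, pr K (zero K x) = x) /\
  (forall x, pr K (sec K x) = x) /\
  opn F /\
  homeo_onto (psi K) (@zset _ K) F.

(* Atlas data: indexed by subsets of {0..N-1}.  Partial maps are total *)
(* functions together with their domain predicates.                   *)

Record atlas_data (X : Type) (N : nat) := AtlasData {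
  Foot : 'I_N -> X -> Prop;
  Ch : {set 'I_N} -> chart_data X;                       (* K_I ; K_{i} = basic chart *)
  UU : forall I J : {set 'I_N}, cU (Ch I) -> Prop;
  phi : forall I J : {set 'I_N}, cU (Ch I) -> cU (Ch J);
  Phi : forall I J : {set 'I_N}, cE (Ch I) -> cE (Ch J);
  Efilt : forall I J : {set 'I_N}, cE (Ch J) -> Prop }.

Arguments Foot {X N}. Arguments Ch {X N}. Arguments UU {X N}.
Arguments phi {X N}. Arguments Phi {X N}. Arguments Efilt {X N}.

Section AtlasDefs.
Variables (X : topspace) (N : nat) (A : atlas_data X N).
Implicit Types I J L H : {set 'I_N}.

Definition FI (I : {set 'I_N}) (x : X) : Prop := forall i, i \in I -> Foot A i x.

Definition IK (I : {set 'I_N}) : Prop := I != set0 /\ exists x, FI I x.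

Definition is_coord_change (I J : {set 'I_N}) : Prop :=
  opn (UU A I J) /\
  (forall x, (UU A I J x /\ zset x) <-> (zset x /\ FI I (psi _ x) /\ FI J (psi _ x))) /\
  embedding_on (Phi A I J) (fun e => UU A I J (pr _ e)) /\
  embedding_on (phi A I J) (UU A I J) /\
  (forall e, UU A I J (pr _ e) -> pr _ (Phi A I J e) = phi A I J (pr _ e)) /\
  (forall x, UU A I J x -> zero _ (phi A I J x) = Phi A I J (zero _ x)) /\
  (forall x, UU A I J x -> sec _ (phi A I J x) = Phi A I J (sec _ x)) /\
  (forall x, UU A I J x -> zset x ->
     zset (phi A I J x) /\ psi _ (phi A I J x) = psi _ x).

Definition UIJK (I J L : {set 'I_N}) (x : cU (Ch A I)) : Prop :=
  UU A I J x /\ UU A J L (phi A I J x).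

Definition is_top_atlas : Prop :=
  (forall i, is_chart (Ch A [set i]) (Foot A i)) /\
  (forall x, exists i, Foot A i x) /\
  (forall J, IK J -> 2 <= #|J| -> is_chart (Ch A J) (FI J)) /\
  (forall I x, UU A I I x) /\
  (forall I x, phi A I I x = x) /\
  (forall I e, Phi A I I e = e) /\
  (forall I J, IK I -> IK J -> I \proper J -> is_coord_change I J) /\
  (forall I J L, IK I -> IK J -> IK L -> I \proper J -> J \proper L ->
     (forall e, @UIJK I J L (pr _ e) -> UU A I L (pr _ e) ->
        Phi A J L (Phi A I J e) = Phi A I L e) /\
     (forall x, @UIJK I J L x -> UU A I L x)).

Definition is_filtered : Prop :=
  (forall I J, IK J -> I \subset J -> closed (Efilt A I J)) /\
  (forall J, IK J -> forall e, Efilt A J J e) /\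
  (forall J, IK J -> forall e, Efilt A set0 J e <-> exists x, e = zero _ x) /\
  (forall I J L, IK J -> IK L -> I \subset J -> J \proper L ->
     forall f, (exists e, UU A J L (pr _ e) /\ Efilt A I J e /\ Phi A J L e = f) <->
               (Efilt A I L f /\ exists u, UU A J L u /\ phi A J L u = pr _ f)) /\
  (forall I H J, IK J -> I \subset J -> H \subset J ->
     forall e, (Efilt A I J e /\ Efilt A H J e) <-> Efilt A (I :&: H) J e) /\
  (forall I J, IK I -> IK J -> I \proper J ->
     open_in (fun y => Efilt A I J (sec _ y))
             (fun y => exists x, UU A I J x /\ phi A I J x = y)).

(* U_IL with the convention U_IL = empty if L not in I_K *)
Definition UUc (I L : {set 'I_N}) (x : cU (Ch A I)) : Prop := IK L /\ UU A I L x.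

Definition is_tame : Prop :=
  (forall I J L, IK I -> IK J -> IK L -> I \subset J -> I \subset L ->
     forall x, (UU A I J x /\ UU A I L x) <-> @UUc I (J :|: L) x) /\
  (forall I J L, IK I -> IK J -> IK L -> I \subset J -> J \subset L ->
     forall y, (exists x, UU A I L x /\ UU A I J x /\ phi A I J x = y) <->
               (UU A J L y /\ Efilt A I J (sec _ y))).

Definition is_tame_top_atlas : Prop := is_top_atlas /\ is_filtered /\ is_tame.

Definition ptU := {I : {set 'I_N} & cU (Ch A I)}.
Definition ptE := {I : {set 'I_N} & cE (Ch A I)}.

Inductive stepU : ptU -> ptU -> Prop :=
  | stepU_intro I J (x : cU (Ch A I)) :
      IK I -> IK J -> I \subset J -> UU A I J x ->
      stepU (existT _ I x) (existT _ J (phi A I J x)).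

Inductive stepE : ptE -> ptE -> Prop :=
  | stepE_intro I J (e : cE (Ch A I)) :
      IK I -> IK J -> I \subset J -> UU A I J (pr _ e) ->
      stepE (existT _ I e) (existT _ J (Phi A I J e)).

Definition equivU : ptU -> ptU -> Prop := clos_refl_sym_trans ptU stepU.
Definition equivE : ptE -> ptE -> Prop := clos_refl_sym_trans ptE stepE.

End AtlasDefs.

Arguments FI {X N}. Arguments IK {X N}. Arguments is_tame_top_atlas {X N}.
Arguments equivU {X N}. Arguments equivE {X N}.

From Stdlib Require Import Reals List Relations.
From HB Require Import structures.
From mathcomp Require Import all_boot.

Set Implicit Arguments.
Unset Strict Implicit.
Unset Printing Implicit Defensive.

(* In a tame atlas the coordinate changes form a system of partial injections
   whose domains are compatible with unions: U_IJ ∩ U_IK = U_I(J∪K), domains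
   restrict to intermediate charts, and phi_IJ(U_IL) = U_JL ∩ s_J^-1(E_IJ).
   Consequently "having the same image in the chart of I ∪ J" is already
   transitive, hence it is the equivalence relation generated by the coordinate
   changes; the argument is the same for the bundles, and taking I = J gives
   injectivity of the projections.  For the description (3), a common image in
   the chart of L = I ∪ J has its section (for bundle points: the point
   itself) in E_IL ∩ E_JL = E_(I∩J)L, so by tameness it comes from the chart
   of I ∩ J, or, when I ∩ J is empty, lies on the zero section. *)

Section TameAtlas.
Variables (X : topspace) (N : nat) (A : atlas_data X N).
Implicit Types I J K L M H : {set 'I_N}.

Lemma IK_subset L H : IK A L -> H \subset L -> H != set0 -> IK A H.
Proof.
move=> [_ [z hz]] hHL hH; split=> //; exists z => i hi; apply: hz; exact: (subsetP hHL).
Qed.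

Lemma IK_setU_subset I K L :
  IK A I -> IK A L -> I \subset L -> K \subset L -> IK A (I :|: K).
Proof.
move=> [hI0 _] hL hIL hKL; apply: (IK_subset hL); first by rewrite subUset hIL.
by rewrite setU_eq0 negb_and hI0.
Qed.

Lemma FI_setU I J z : FI A I z -> FI A J z -> FI A (I :|: J) z.
Proof. by move=> hI hJ i; rewrite in_setU => /orP [] ?; [exact: hI | exact: hJ]. Qed.

(* The structure shared by (U_IJ, phi_IJ) and (pr_I^-1(U_IJ), Phi_IJ) in a
   tame atlas; [dom_lift] is the inclusion U_IJL ⊆ U_IL of the cocycle
   condition. *)
Record tame_system (T : {set 'I_N} -> Type) (D : forall I J, T I -> Prop)
    (f : forall I J, T I -> T J) : Prop := TameSystem {
  dom_id : forall I (x : T I), D I I x;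
  tr_inj : forall I J, IK A I -> IK A J -> I \subset J ->
    forall x x', D I J x -> D I J x' -> f I J x = f I J x' -> x = x';
  tr_cocycle : forall I J L, IK A I -> IK A J -> IK A L -> I \subset J -> J \subset L ->
    forall x, D I J x -> D J L (f I J x) -> f J L (f I J x) = f I L x;
  dom_setU : forall I J L, IK A I -> IK A J -> IK A L -> I \subset J -> I \subset L ->
    forall x, D I J x -> D I L x -> IK A (J :|: L) /\ D I (J :|: L) x;
  dom_restr : forall I M L, IK A I -> IK A M -> IK A L -> I \subset M -> M \subset L ->
    forall x, D I L x -> D I M x;
  dom_push : forall I M L, IK A I -> IK A M -> IK A L -> I \subset M -> M \subset L ->
    forall x, D I M x -> D I L x -> D M L (f I M x);
  dom_lift : forall I M L, IK A I -> IK A M -> IK A L -> I \subset M -> M \subset L ->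
    forall x, D I M x -> D M L (f I M x) -> D I L x }.

Section TameSystem.
Local Unset Implicit Arguments.
Variables (T : {set 'I_N} -> Type) (D : forall I J, T I -> Prop)
  (f : forall I J, T I -> T J).
Local Set Implicit Arguments.
Hypothesis hS : tame_system D f.

Definition union_eq I J (x : T I) (y : T J) : Prop :=
  IK A (I :|: J) /\ D I (I :|: J) x /\ D J (I :|: J) y /\
  f I (I :|: J) x = f J (I :|: J) y.

Lemma union_eq_refl I (x : T I) : IK A I -> union_eq x x.
Proof.
move=> hI; rewrite /union_eq setUid; have hx := dom_id hS x.
exact: (conj hI (conj hx (conj hx erefl))).
Qed.

Lemma union_eq_sym I J (x : T I) (y : T J) : union_eq x y -> union_eq y x.
Proof. by rewrite /union_eq setUC => -[? [? [? ?]]]. Qed.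

Lemma union_eq_restr I K L (x : T I) (z : T K) :
  IK A I -> IK A K -> IK A L -> I \subset L -> K \subset L ->
  D I L x -> D K L z -> f I L x = f K L z -> union_eq x z.
Proof.
move=> hI hK hL hIL hKL hxL hzL exz.
have hQ : IK A (I :|: K) := IK_setU_subset hI hL hIL hKL.
have hQL : I :|: K \subset L by rewrite subUset hIL.
have hIQ := subsetUl I K; have hKQ := subsetUr I K.
have hxQ := dom_restr hS hI hQ hL hIQ hQL hxL.
have hzQ := dom_restr hS hK hQ hL hKQ hQL hzL.
have hxQL := dom_push hS hI hQ hL hIQ hQL hxQ hxL.
have hzQL := dom_push hS hK hQ hL hKQ hQL hzQ hzL.
do 3!split=> //; apply: (tr_inj hS hQ hL hQL hxQL hzQL).
by rewrite (tr_cocycle hS hI hQ hL hIQ hQL hxQ hxQL)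
           (tr_cocycle hS hK hQ hL hKQ hQL hzQ hzQL).
Qed.

Lemma union_eq_lift I J L (x : T I) (y : T J) :
  IK A I -> IK A J -> IK A L -> I :|: J \subset L ->
  union_eq x y -> D J L y -> D I L x /\ f I L x = f J L y.
Proof.
move=> hI hJ hL hML [hM [hxM [hyM exy]]] hyL.
have hIM := subsetUl I J; have hJM := subsetUr I J.
have hyML := dom_push hS hJ hM hL hJM hML hyM hyL.
have hxML : D (I :|: J) L (f I (I :|: J) x) by rewrite exy.
split; first exact: (dom_lift hS hI hM hL hIM hML hxM hxML).
by rewrite -(tr_cocycle hS hI hM hL hIM hML hxM hxML) exy
           (tr_cocycle hS hJ hM hL hJM hML hyM hyML).
Qed.

Lemma union_eq_trans I J K (x : T I) (y : T J) (z : T K) :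
  IK A I -> IK A J -> IK A K -> union_eq x y -> union_eq y z -> union_eq x z.
Proof.
move=> hI hJ hK hxy hyz.
have [hM [_ [hyM _]]] := hxy; have [hP [hyP _]] := hyz.
have [hL hyL] := dom_setU hS hJ hM hP (subsetUr I J) (subsetUl J K) hyM hyP.
have hML := subsetUl (I :|: J) (J :|: K); have hPL := subsetUr (I :|: J) (J :|: K).
have [hxL exL] := union_eq_lift hI hJ hL hML hxy hyL.
have hKJL : K :|: J \subset (I :|: J) :|: (J :|: K) by rewrite setUC.
have [hzL ezL] := union_eq_lift hK hJ hL hKJL (union_eq_sym hyz) hyL.
apply: (union_eq_restr hI hK hL _ _ hxL hzL); last by rewrite exL ezL.
  exact: subset_trans (subsetUl I J) hML.
exact: subset_trans (subsetUr J K) hPL.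
Qed.

Lemma union_eq_of_common H I J (w : T H) :
  IK A H -> IK A I -> IK A J -> H \subset I -> H \subset J ->
  D H I w -> D H J w -> union_eq (f H I w) (f H J w).
Proof.
move=> hH hI hJ hHI hHJ hwI hwJ.
have [hL hwL] := dom_setU hS hH hI hJ hHI hHJ hwI hwJ.
have hIL := subsetUl I J; have hJL := subsetUr I J.
have hwIL := dom_push hS hH hI hL hHI hIL hwI hwL.
have hwJL := dom_push hS hH hJ hL hHJ hJL hwJ hwL.
do 3!split=> //.
by rewrite (tr_cocycle hS hH hI hL hHI hIL hwI hwIL)
           (tr_cocycle hS hH hJ hL hHJ hJL hwJ hwJL).
Qed.

Lemma tr_descend H I L (w : T H) (x : T I) :
  IK A H -> IK A I -> IK A L -> H \subset I -> I \subset L ->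
  D H L w -> D I L x -> f H L w = f I L x -> D H I w /\ f H I w = x.
Proof.
move=> hH hI hL hHI hIL hwL hxL e.
have hwI := dom_restr hS hH hI hL hHI hIL hwL.
have hwIL := dom_push hS hH hI hL hHI hIL hwI hwL.
split=> //; apply: (tr_inj hS hI hL hIL hwIL hxL).
by rewrite (tr_cocycle hS hH hI hL hHI hIL hwI hwIL).
Qed.

Lemma union_eq_id I (x y : T I) : IK A I -> union_eq x y -> x = y.
Proof. by move=> hI [hL [hx [hy e]]]; exact: (tr_inj hS hI hL (subsetUl I I) hx hy e). Qed.

Section Closure.
Variable step : relation {I & T I}.
Hypothesis step_union_eq : forall p q, step p q ->
  IK A (tag p) /\ IK A (tag q) /\ union_eq (tagged p) (tagged q).
Hypothesis step_tr : forall I J (x : T I), IK A I -> IK A J -> I \subset J ->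
  D I J x -> step (existT _ I x) (existT _ J (f I J x)).

Lemma union_eq_of_clos p q : clos_refl_sym_trans_1n _ step p q ->
  IK A (tag p) -> IK A (tag q) /\ union_eq (tagged p) (tagged q).
Proof.
elim=> {p q} [p hp | p r q hpr _ IH hp]; first by split=> //; exact: union_eq_refl.
have [hr hpr'] : IK A (tag r) /\ union_eq (tagged p) (tagged r).
  case: hpr => /step_union_eq [? [? ?]]; split=> //; exact: union_eq_sym.
have [hq hrq] := IH hr.
by split=> //; exact: union_eq_trans hpr' hrq.
Qed.

Lemma clos_union_eq I J (x : T I) (y : T J) : IK A I -> IK A J ->
  clos_refl_sym_trans _ step (existT _ I x) (existT _ J y) <-> union_eq x y.
Proof.
move=> hI hJ; split.
  by move=> /clos_rst_rst1n_iff /union_eq_of_clos /(_ hI) [].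
move=> [hL [hx [hy e]]].
apply: (rst_trans _ _ _ (existT _ (I :|: J) (f I (I :|: J) x))).
  by apply: rst_step; apply: step_tr => //; exact: subsetUl.
by rewrite e; apply/rst_sym/rst_step; apply: step_tr => //; exact: subsetUr.
Qed.

End Closure.
End TameSystem.

Hypothesis hA : is_tame_top_atlas A.

Record chart_laws I : Prop := ChartLaws {
  pr_zero : forall x : cU (Ch A I), pr _ (zero _ x) = x;
  pr_sec : forall x : cU (Ch A I), pr _ (sec _ x) = x;
  psi_FI : forall x : cU (Ch A I), zset x -> FI A I (psi _ x);
  psi_inj : forall x y : cU (Ch A I), zset x -> zset y -> psi _ x = psi _ y -> x = y }.

Lemma chart_lawsP I : IK A I -> chart_laws I.
Proof.
have [[hc1 [_ [hcJ _]]] _] := hA; move=> hI.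
have [F hF hFI] : exists2 F, is_chart (Ch A I) F & forall z, F z -> FI A I z.
  have [h2|h1] := leqP 2 #|I|; first by exists (FI A I) => //; exact: hcJ.
  have /cards1P [i eI] : #|I| == 1.
    by move: hI.1 h1; rewrite -card_gt0; case: #|I| => [|[|]].
  by rewrite eI; exists (Foot A i) => // z hz j; rewrite in_set1 => /eqP ->.
have [_ [_ [_ [_ [_ [hz [hs [_ [[hinj _] [hpsi _]]]]]]]]]] := hF.
by split=> // x hx; apply/hFI/hpsi.
Qed.

Record coord_change_laws I J : Prop := CoordChangeLaws {
  pr_Phi : forall e, UU A I J (pr _ e) -> pr _ (Phi A I J e) = phi A I J (pr _ e);
  zero_phi : forall x, UU A I J x -> zero _ (phi A I J x) = Phi A I J (zero _ x);
  sec_phi : forall x, UU A I J x -> sec _ (phi A I J x) = Phi A I J (sec _ x);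
  zset_phi : forall x, UU A I J x -> zset x -> zset (phi A I J x);
  psi_phi : forall x, UU A I J x -> zset x -> psi _ (phi A I J x) = psi _ x;
  phi_inj : forall x x', UU A I J x -> UU A I J x' -> phi A I J x = phi A I J x' -> x = x';
  Phi_inj : forall e e', UU A I J (pr _ e) -> UU A I J (pr _ e') ->
    Phi A I J e = Phi A I J e' -> e = e';
  UU_of_zset : forall x, zset x -> FI A J (psi _ x) -> UU A I J x }.

Lemma coord_change_lawsP I J : IK A I -> IK A J -> I \subset J -> coord_change_laws I J.
Proof.
have [[_ [_ [_ [hUII [hphiII [hPhiII [hcc _]]]]]]] _] := hA; move=> hI hJ hIJ.
have [<-|nIJ] := eqVneq I J.
  by split=> [e _|x _|x _|x _|x _ _|x x' _ _|e e' _ _|x _ _];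
    rewrite ?hphiII ?hPhiII //; exact: hUII.
have pIJ : I \proper J by rewrite properEneq nIJ.
have [_ [hzs [[hPinj _] [[hpinj _] [hpr [hzero [hsec hpsi]]]]]]] := hcc I J hI hJ pIJ.
split=> // [x hx hz|x hx hz|x hz hF]; first exact: (hpsi x hx hz).1.
  exact: (hpsi x hx hz).2.
exact: (proj2 (hzs x) (conj hz (conj (psi_FI (chart_lawsP hI) hz) hF))).1.
Qed.

Lemma UU_setU I J L : IK A I -> IK A J -> IK A L -> I \subset J -> I \subset L ->
  forall x, UU A I J x -> UU A I L x -> IK A (J :|: L) /\ UU A I (J :|: L) x.
Proof.
have [_ [_ [ht1 _]]] := hA; move=> hI hJ hL hIJ hIL x hxJ hxL.
exact: (proj1 (ht1 I J L hI hJ hL hIJ hIL x) (conj hxJ hxL)).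
Qed.

Lemma UU_restr I M L : IK A I -> IK A M -> IK A L -> I \subset M -> M \subset L ->
  forall x, UU A I L x -> UU A I M x.
Proof.
have [_ [_ [ht1 _]]] := hA; move=> hI hM hL hIM hML x hxL.
have hIL := subset_trans hIM hML.
have hxML : UUc (A := A) (M :|: L) x by rewrite /UUc (setUidPr hML).
exact: (proj2 (ht1 I M L hI hM hL hIM hIL x) hxML).1.
Qed.

Lemma UU_push I M L : IK A I -> IK A M -> IK A L -> I \subset M -> M \subset L ->
  forall x, UU A I M x -> UU A I L x -> UU A M L (phi A I M x).
Proof.
have [_ [_ [_ ht2]]] := hA; move=> hI hM hL hIM hML x hxM hxL.
by have [/(_ (ex_intro _ x _)) []] := ht2 I M L hI hM hL hIM hML (phi A I M x).
Qed.

Lemma filt_sec_phi I M : IK A I -> IK A M -> I \subset M ->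
  forall x, UU A I M x -> Efilt A I M (sec _ (phi A I M x)).
Proof.
have [_ [_ [_ ht2]]] := hA; move=> hI hM hIM x hxM.
by have [/(_ (ex_intro _ x _)) []] := ht2 I M M hI hM hM hIM (subxx M) (phi A I M x).
Qed.

Lemma UU_lift I M L : IK A I -> IK A M -> IK A L -> I \subset M -> M \subset L ->
  forall x, UU A I M x -> UU A M L (phi A I M x) -> UU A I L x.
Proof.
have [_ [_ [_ ht2]]] := hA; move=> hI hM hL hIM hML x hxM hxML.
have hfilt := filt_sec_phi hI hM hIM hxM.
have [_ /(_ (conj hxML hfilt)) [x' [hx'L [hx'M ex']]]] :=
  ht2 I M L hI hM hL hIM hML (phi A I M x).
by rewrite -(phi_inj (coord_change_lawsP hI hM hIM) hx'M hxM ex').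
Qed.

Lemma Phi_cocycle I J L : IK A I -> IK A J -> IK A L -> I \subset J -> J \subset L ->
  forall e, UU A I J (pr _ e) -> UU A J L (phi A I J (pr _ e)) ->
  Phi A J L (Phi A I J e) = Phi A I L e.
Proof.
have [[_ [_ [_ [_ [_ [hPhiII [_ hcoc]]]]]]] _] := hA.
move=> hI hJ hL hIJ hJL e heJ heJL.
have heL := UU_lift hI hJ hL hIJ hJL heJ heJL.
have [<-|nIJ] := eqVneq I J; first by rewrite hPhiII.
have [<-|nJL] := eqVneq J L; first by rewrite hPhiII.
have pIJ : I \proper J by rewrite properEneq nIJ.
have pJL : J \proper L by rewrite properEneq nJL.
exact: (hcoc I J L hI hJ hL pIJ pJL).1.
Qed.

(* The cocycle identity for the base maps is read off from the bundle maps
   along the zero section. *)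
Lemma phi_cocycle I J L : IK A I -> IK A J -> IK A L -> I \subset J -> J \subset L ->
  forall x, UU A I J x -> UU A J L (phi A I J x) ->
  phi A J L (phi A I J x) = phi A I L x.
Proof.
move=> hI hJ hL hIJ hJL x hxJ hxJL.
have hIL := subset_trans hIJ hJL.
have cIJ := coord_change_lawsP hI hJ hIJ; have cJL := coord_change_lawsP hJ hL hJL.
have cIL := coord_change_lawsP hI hL hIL.
have ez := pr_zero (chart_lawsP hI) x.
have hxL := UU_lift hI hJ hL hIJ hJL hxJ hxJL.
rewrite -ez -(pr_Phi cIJ) ?ez // -(pr_Phi cJL) ?(pr_Phi cIJ) ?ez //.
by rewrite (Phi_cocycle hI hJ hL hIJ hJL) ?ez // (pr_Phi cIL) ?ez.
Qed.

Lemma tame_systemU : tame_system (T := fun I => cU (Ch A I)) (UU A) (phi A).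
Proof.
have [[_ [_ [_ [hUII _]]]] _] := hA.
split=> //.
- by move=> I J hI hJ hIJ; exact: phi_inj (coord_change_lawsP hI hJ hIJ).
- exact: phi_cocycle.
- exact: UU_setU.
- exact: UU_restr.
- exact: UU_push.
- exact: UU_lift.
Qed.

Definition domE I J (e : cE (Ch A I)) : Prop := UU A I J (pr _ e).

Lemma tame_systemE : tame_system domE (Phi A).
Proof.
have [[_ [_ [_ [hUII _]]]] _] := hA.
rewrite /domE; split=> //.
- by move=> I J hI hJ hIJ; exact: Phi_inj (coord_change_lawsP hI hJ hIJ).
- move=> I J L hI hJ hL hIJ hJL e heJ.
  rewrite (pr_Phi (coord_change_lawsP hI hJ hIJ)) //; exact: Phi_cocycle.
- by move=> I J L hI hJ hL hIJ hIL e; exact: UU_setU.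
- by move=> I M L hI hM hL hIM hML e; exact: UU_restr.
- move=> I M L hI hM hL hIM hML e heM heL.
  rewrite (pr_Phi (coord_change_lawsP hI hM hIM)) //; exact: UU_push.
- move=> I M L hI hM hL hIM hML e heM.
  rewrite (pr_Phi (coord_change_lawsP hI hM hIM)) //; exact: UU_lift.
Qed.

Lemma filt_Phi I L : IK A I -> IK A L -> I \subset L ->
  forall e, UU A I L (pr _ e) -> Efilt A I L (Phi A I L e).
Proof.
have [[_ [_ [_ [_ [_ [hPhiII _]]]]]] [[_ [hf1 [_ [hf3 _]]]] _]] := hA.
move=> hI hL hIL e he.
have [<-|nIL] := eqVneq I L; first by rewrite hPhiII; exact: hf1.
have pIL : I \proper L by rewrite properEneq nIL.
have [/(_ (ex_intro _ e (conj he (conj (hf1 I hI e) erefl)))) [] //] :=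
  hf3 I I L hI hL (subxx I) pIL (Phi A I L e).
Qed.

Lemma Efilt_setI I J L g : IK A L -> I \subset L -> J \subset L ->
  Efilt A I L g -> Efilt A J L g -> Efilt A (I :&: J) L g.
Proof.
have [_ [[_ [_ [_ [_ [hf4 _]]]]] _]] := hA; move=> hL hIL hJL hgI hgJ.
exact: (proj1 (hf4 I J L hL hIL hJL g) (conj hgI hgJ)).
Qed.

Lemma zset_of_filt0 L (z : cU (Ch A L)) : IK A L -> Efilt A set0 L (sec _ z) -> zset z.
Proof.
have [_ [[_ [_ [hf2 _]]] _]] := hA.
move=> hL /(proj1 (hf2 L hL _)) [a ea]; have c := chart_lawsP hL.
by rewrite /zset ea -[in RHS](pr_sec c z) ea (pr_zero c).
Qed.

Lemma eq_zero_of_filt0 I L (e : cE (Ch A I)) : IK A I -> IK A L -> I \subset L ->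
  UU A I L (pr _ e) -> Efilt A set0 L (Phi A I L e) -> e = zero _ (pr _ e).
Proof.
have [_ [[_ [_ [hf2 _]]] _]] := hA.
move=> hI hL hIL he /(proj1 (hf2 L hL _)) [a ea].
have c := coord_change_lawsP hI hL hIL.
have he0 : UU A I L (pr _ (zero _ (pr _ e))) by rewrite (pr_zero (chart_lawsP hI)).
apply: (Phi_inj c he he0); rewrite -(zero_phi c he) ea; congr zero.
by rewrite -(pr_Phi c he) ea (pr_zero (chart_lawsP hL)).
Qed.

Lemma zset_of_phi I L (x : cU (Ch A I)) : IK A I -> IK A L -> I \subset L ->
  UU A I L x -> zset (phi A I L x) -> zset x.
Proof.
move=> hI hL hIL hx hz.
have c := coord_change_lawsP hI hL hIL; have cI := chart_lawsP hI.
apply: (Phi_inj c); rewrite ?(pr_zero cI) ?(pr_sec cI) //.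
by rewrite -(sec_phi c hx) -(zero_phi c hx); exact: hz.
Qed.

Lemma phi_preimage_filt H L (y : cU (Ch A L)) : IK A H -> IK A L -> H \subset L ->
  Efilt A H L (sec _ y) -> exists2 w, UU A H L w & phi A H L w = y.
Proof.
have [[_ [_ [_ [hUII _]]]] [_ [_ ht2]]] := hA; move=> hH hL hHL hy.
have [_ /(_ (conj (hUII L y) hy)) [w [hw [_ ew]]]] :=
  ht2 H L L hH hL hL hHL (subxx L) y.
by exists w.
Qed.

Lemma Phi_preimage_filt H L (g : cE (Ch A L)) (w : cU (Ch A H)) :
  IK A H -> IK A L -> H \subset L -> UU A H L w -> phi A H L w = pr _ g ->
  Efilt A H L g -> exists2 g0, UU A H L (pr _ g0) & Phi A H L g0 = g.
Proof.
have [[_ [_ [_ [hUII [_ [hPhiII _]]]]]] [[_ [_ [_ [hf3 _]]]] _]] := hA.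
move=> hH hL hHL hw ew hg.
have [eHL|nHL] := eqVneq H L.
  by subst H; exists g; [exact: hUII | exact: hPhiII].
have pHL : H \proper L by rewrite properEneq nHL.
have [_ /(_ (conj hg (ex_intro _ w (conj hw ew)))) [g0 [hg0 [_ eg0]]]] :=
  hf3 H H L hH hL (subxx H) pHL g.
by exists g0.
Qed.

Lemma union_eqU_filt I J (x : cU (Ch A I)) (y : cU (Ch A J)) : IK A I -> IK A J ->
  union_eq (UU A) (phi A) x y ->
  Efilt A (I :&: J) (I :|: J) (sec _ (phi A I (I :|: J) x)).
Proof.
move=> hI hJ [hL [hx [hy e]]].
apply: (Efilt_setI hL (subsetUl I J) (subsetUr I J)).
  exact: filt_sec_phi hI hL (subsetUl I J) x hx.
rewrite e; exact: filt_sec_phi hJ hL (subsetUr I J) y hy.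
Qed.

Lemma union_eqU_image I J (x : cU (Ch A I)) (y : cU (Ch A J)) : IK A I -> IK A J ->
  I :&: J != set0 -> union_eq (UU A) (phi A) x y ->
  exists2 w, UU A (I :&: J) (I :|: J) w &
    phi A (I :&: J) (I :|: J) w = phi A I (I :|: J) x.
Proof.
move=> hI hJ hne hxy.
apply: (phi_preimage_filt _ hxy.1 _ (union_eqU_filt hI hJ hxy)).
  exact: IK_subset hI (subsetIl I J) hne.
exact: subset_trans (subsetIl I J) (subsetUl I J).
Qed.

Lemma union_eqU_meet I J (x : cU (Ch A I)) (y : cU (Ch A J)) : IK A I -> IK A J ->
  I :&: J != set0 -> union_eq (UU A) (phi A) x y ->
  exists w, UU A (I :&: J) I w /\ UU A (I :&: J) J w /\
    phi A (I :&: J) I w = x /\ phi A (I :&: J) J w = y.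
Proof.
move=> hI hJ hne hxy; have [hL [hx [hy e]]] := hxy.
have hH := IK_subset hI (subsetIl I J) hne.
have [w hw ew] := union_eqU_image hI hJ hne hxy.
have [hwI ewI] :=
  tr_descend tame_systemU hH hI hL (subsetIl I J) (subsetUl I J) hw hx ew.
have [hwJ ewJ] :=
  tr_descend tame_systemU hH hJ hL (subsetIr I J) (subsetUr I J) hw hy (etrans ew e).
by exists w.
Qed.

Lemma union_eqU_disjoint I J (x : cU (Ch A I)) (y : cU (Ch A J)) : IK A I -> IK A J ->
  I :&: J = set0 -> union_eq (UU A) (phi A) x y ->
  zset x /\ zset y /\ psi _ x = psi _ y.
Proof.
move=> hI hJ h0 hxy; have [hL [hx [hy e]]] := hxy.
have hIL := subsetUl I J; have hJL := subsetUr I J.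
have hz : zset (phi A I (I :|: J) x).
  by apply: (zset_of_filt0 hL); rewrite -h0; exact: union_eqU_filt hxy.
have cI := coord_change_lawsP hI hL hIL; have cJ := coord_change_lawsP hJ hL hJL.
have zx := zset_of_phi hI hL hIL hx hz.
have zy : zset y by apply: (zset_of_phi hJ hL hJL hy); rewrite -e.
by split=> //; split=> //; rewrite -(psi_phi cI hx zx) -(psi_phi cJ hy zy) e.
Qed.

Lemma union_eqU_of_psi I J (x : cU (Ch A I)) (y : cU (Ch A J)) : IK A I -> IK A J ->
  zset x -> zset y -> psi _ x = psi _ y -> union_eq (UU A) (phi A) x y.
Proof.
move=> hI hJ zx zy e.
have hFx : FI A (I :|: J) (psi _ x).
  apply: FI_setU (psi_FI (chart_lawsP hI) zx) _.
  by rewrite e; exact (psi_FI (chart_lawsP hJ) zy).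
have hL : IK A (I :|: J).
  split; last by exists (psi _ x).
  by rewrite setU_eq0 negb_and hI.1.
have cI := coord_change_lawsP hI hL (subsetUl I J).
have cJ := coord_change_lawsP hJ hL (subsetUr I J).
have hx := UU_of_zset cI zx hFx.
have hy : UU A J (I :|: J) y by apply: (UU_of_zset cJ zy); rewrite -e.
do 3!split=> //; apply: (psi_inj (chart_lawsP hL)).
- exact (zset_phi cI hx zx).
- exact (zset_phi cJ hy zy).
by rewrite (psi_phi cI hx zx) (psi_phi cJ hy zy).
Qed.

Definition through_meetU I J (x : cU (Ch A I)) (y : cU (Ch A J)) : Prop :=
  (I :&: J != set0 /\
   exists w : cU (Ch A (I :&: J)),
     UU A (I :&: J) I w /\ UU A (I :&: J) J w /\
     phi A (I :&: J) I w = x /\ phi A (I :&: J) J w = y) \/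
  (I :&: J = set0 /\ zset x /\ zset y /\ psi _ x = psi _ y).

Lemma union_eqU_through_meet I J (x : cU (Ch A I)) (y : cU (Ch A J)) :
  IK A I -> IK A J -> union_eq (UU A) (phi A) x y <-> through_meetU x y.
Proof.
move=> hI hJ; split=> [hxy|].
  have [h0|hne] := eqVneq (I :&: J) set0.
    by right; split=> //; exact: union_eqU_disjoint hxy.
  by left; split=> //; exact: union_eqU_meet hxy.
case=> [[hne [w [hwI [hwJ [<- <-]]]]]|[_ [zx [zy e]]]]; last exact: union_eqU_of_psi.
exact: (union_eq_of_common tame_systemU (IK_subset hI (subsetIl I J) hne) hI hJ
  (subsetIl I J) (subsetIr I J) hwI hwJ).
Qed.

Lemma union_eqE_pr I J (e : cE (Ch A I)) (f : cE (Ch A J)) : IK A I -> IK A J ->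
  union_eq domE (Phi A) e f -> union_eq (UU A) (phi A) (pr _ e) (pr _ f).
Proof.
move=> hI hJ [hL [he [hf ef]]]; do 3!split=> //.
by rewrite -(pr_Phi (coord_change_lawsP hI hL (subsetUl I J)) he) ef
           (pr_Phi (coord_change_lawsP hJ hL (subsetUr I J)) hf).
Qed.

Lemma union_eqE_zero I J (x : cU (Ch A I)) (y : cU (Ch A J)) : IK A I -> IK A J ->
  union_eq (UU A) (phi A) x y -> union_eq domE (Phi A) (zero _ x) (zero _ y).
Proof.
move=> hI hJ [hL [hx [hy exy]]].
rewrite /union_eq /domE (pr_zero (chart_lawsP hI)) (pr_zero (chart_lawsP hJ)).
do 3!split=> //.
by rewrite -(zero_phi (coord_change_lawsP hI hL (subsetUl I J)) hx) exy
           (zero_phi (coord_change_lawsP hJ hL (subsetUr I J)) hy).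
Qed.

Lemma union_eqE_filt I J (e : cE (Ch A I)) (f : cE (Ch A J)) : IK A I -> IK A J ->
  union_eq domE (Phi A) e f -> Efilt A (I :&: J) (I :|: J) (Phi A I (I :|: J) e).
Proof.
move=> hI hJ [hL [he [hf ef]]].
apply: (Efilt_setI hL (subsetUl I J) (subsetUr I J)).
  exact: filt_Phi hI hL (subsetUl I J) e he.
rewrite ef; exact: filt_Phi hJ hL (subsetUr I J) f hf.
Qed.

Lemma union_eqE_meet I J (e : cE (Ch A I)) (f : cE (Ch A J)) : IK A I -> IK A J ->
  I :&: J != set0 -> union_eq domE (Phi A) e f ->
  exists g, UU A (I :&: J) I (pr _ g) /\ UU A (I :&: J) J (pr _ g) /\
    Phi A (I :&: J) I g = e /\ Phi A (I :&: J) J g = f.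
Proof.
move=> hI hJ hne hef; have [hL [he [hf ef]]] := hef.
have hH := IK_subset hI (subsetIl I J) hne.
have hHL := subset_trans (subsetIl I J) (subsetUl I J).
have [w hw ew] := union_eqU_image hI hJ hne (union_eqE_pr hI hJ hef).
rewrite -(pr_Phi (coord_change_lawsP hI hL (subsetUl I J)) he) in ew.
have [g hg eg] := Phi_preimage_filt hH hL hHL hw ew (union_eqE_filt hI hJ hef).
have [hgI egI] :=
  tr_descend tame_systemE hH hI hL (subsetIl I J) (subsetUl I J) hg he eg.
have [hgJ egJ] :=
  tr_descend tame_systemE hH hJ hL (subsetIr I J) (subsetUr I J) hg hf (etrans eg ef).
by exists g.
Qed.

Lemma union_eqE_disjoint I J (e : cE (Ch A I)) (f : cE (Ch A J)) : IK A I -> IK A J ->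
  I :&: J = set0 -> union_eq domE (Phi A) e f ->
  exists x y, e = sec _ x /\ e = zero _ x /\ f = sec _ y /\ f = zero _ y /\
    psi _ x = psi _ y.
Proof.
move=> hI hJ h0 hef; have [hL [he [hf ef]]] := hef.
have hfilt := union_eqE_filt hI hJ hef; rewrite h0 in hfilt.
have [zx [zy exy]] := union_eqU_disjoint hI hJ h0 (union_eqE_pr hI hJ hef).
have e0 := eq_zero_of_filt0 hI hL (subsetUl I J) he hfilt.
have f0 : f = zero _ (pr _ f).
  by apply: (eq_zero_of_filt0 hJ hL (subsetUr I J) hf); rewrite -ef.
exists (pr _ e), (pr _ f); move: zx zy; rewrite /zset => -> ->.
by rewrite -e0 -f0; do !split.
Qed.

Definition through_meetE I J (e : cE (Ch A I)) (f : cE (Ch A J)) : Prop :=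
  (I :&: J != set0 /\
   exists g : cE (Ch A (I :&: J)),
     UU A (I :&: J) I (pr _ g) /\ UU A (I :&: J) J (pr _ g) /\
     Phi A (I :&: J) I g = e /\ Phi A (I :&: J) J g = f) \/
  (I :&: J = set0 /\
   exists (x : cU (Ch A I)) (y : cU (Ch A J)),
     e = sec _ x /\ e = zero _ x /\ f = sec _ y /\ f = zero _ y /\ psi _ x = psi _ y).

Lemma union_eqE_through_meet I J (e : cE (Ch A I)) (f : cE (Ch A J)) :
  IK A I -> IK A J -> union_eq domE (Phi A) e f <-> through_meetE e f.
Proof.
move=> hI hJ; split=> [hef|].
  have [h0|hne] := eqVneq (I :&: J) set0.
    by right; split=> //; exact: union_eqE_disjoint hef.
  by left; split=> //; exact: union_eqE_meet hef.
case=> [[hne [g [hgI [hgJ [<- <-]]]]]|[_ [x [y [ex [ex0 [fy [fy0 exy]]]]]]]].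
  exact: (union_eq_of_common tame_systemE (IK_subset hI (subsetIl I J) hne) hI hJ
    (subsetIl I J) (subsetIr I J) hgI hgJ).
have zx : zset x by rewrite /zset -ex -ex0.
have zy : zset y by rewrite /zset -fy -fy0.
by rewrite ex0 fy0; exact: union_eqE_zero (union_eqU_of_psi hI hJ zx zy exy).
Qed.

Lemma stepU_union_eq p q : stepU (A := A) p q ->
  IK A (tag p) /\ IK A (tag q) /\ union_eq (UU A) (phi A) (tagged p) (tagged q).
Proof.
have [[_ [_ [_ [hUII [hphiII _]]]]] _] := hA.
case=> I J x hI hJ hIJ hx /=; do 2!split=> //.
by rewrite /union_eq (setUidPr hIJ) hphiII; do 3!split=> //; exact: hUII.
Qed.

Lemma stepE_union_eq p q : stepE (A := A) p q ->
  IK A (tag p) /\ IK A (tag q) /\ union_eq domE (Phi A) (tagged p) (tagged q).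
Proof.
have [[_ [_ [_ [hUII [_ [hPhiII _]]]]]] _] := hA.
case=> I J e hI hJ hIJ he /=; do 2!split=> //.
by rewrite /union_eq /domE (setUidPr hIJ) hPhiII; do 3!split=> //; exact: hUII.
Qed.

Lemma equivU_union_eq I J (x : cU (Ch A I)) (y : cU (Ch A J)) : IK A I -> IK A J ->
  equivU A (existT _ I x) (existT _ J y) <-> union_eq (UU A) (phi A) x y.
Proof. exact: (clos_union_eq tame_systemU stepU_union_eq (@stepU_intro _ _ A)). Qed.

Lemma equivE_union_eq I J (e : cE (Ch A I)) (f : cE (Ch A J)) : IK A I -> IK A J ->
  equivE A (existT _ I e) (existT _ J f) <-> union_eq domE (Phi A) e f.
Proof. exact: (clos_union_eq tame_systemE stepE_union_eq (@stepE_intro _ _ A)). Qed.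

End TameAtlas.

Theorem mainTheorem6 (X : topspace) (N : nat) (A : atlas_data X N)
  (hXc : compact_space X) (hXm : metrizable X)
  (hA : is_tame_top_atlas A) :
  (forall (I J : {set 'I_N}) (x : cU (Ch A I)) (y : cU (Ch A J)),
     IK A I -> IK A J ->
     (equivU A (existT _ I x) (existT _ J y) <->
        (IK A (I :|: J) /\ UU A I (I :|: J) x /\ UU A J (I :|: J) y /\
         phi A I (I :|: J) x = phi A J (I :|: J) y)) /\
     ((IK A (I :|: J) /\ UU A I (I :|: J) x /\ UU A J (I :|: J) y /\
         phi A I (I :|: J) x = phi A J (I :|: J) y) <->
        ((I :&: J != set0 /\
          exists w : cU (Ch A (I :&: J)),
            UU A (I :&: J) I w /\ UU A (I :&: J) J w /\
            phi A (I :&: J) I w = x /\ phi A (I :&: J) J w = y) \/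
         (I :&: J = set0 /\ zset x /\ zset y /\ psi _ x = psi _ y)))) /\
  (forall (I J : {set 'I_N}) (e : cE (Ch A I)) (f : cE (Ch A J)),
     IK A I -> IK A J ->
     (equivE A (existT _ I e) (existT _ J f) <->
        (IK A (I :|: J) /\ UU A I (I :|: J) (pr _ e) /\ UU A J (I :|: J) (pr _ f) /\
         Phi A I (I :|: J) e = Phi A J (I :|: J) f)) /\
     ((IK A (I :|: J) /\ UU A I (I :|: J) (pr _ e) /\ UU A J (I :|: J) (pr _ f) /\
         Phi A I (I :|: J) e = Phi A J (I :|: J) f) <->
        ((I :&: J != set0 /\
          exists g : cE (Ch A (I :&: J)),
            UU A (I :&: J) I (pr _ g) /\ UU A (I :&: J) J (pr _ g) /\
            Phi A (I :&: J) I g = e /\ Phi A (I :&: J) J g = f) \/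
         (I :&: J = set0 /\
          exists (x : cU (Ch A I)) (y : cU (Ch A J)),
            e = sec _ x /\ e = zero _ x /\ f = sec _ y /\ f = zero _ y /\
            psi _ x = psi _ y)))) /\
  (forall (I : {set 'I_N}), IK A I ->
     (forall x y : cU (Ch A I), equivU A (existT _ I x) (existT _ I y) -> x = y) /\
     (forall e f : cE (Ch A I), equivE A (existT _ I e) (existT _ I f) -> e = f)).
Proof.
split; [|split].
- move=> I J x y hI hJ; split; first exact: equivU_union_eq.
  exact: union_eqU_through_meet.
- move=> I J e f hI hJ; split; first exact: equivE_union_eq.
  exact: union_eqE_through_meet.
- move=> I hI; split.
    by move=> x y /(equivU_union_eq hA x y hI hI) /(union_eq_id (tame_systemU hA) hI).
  by move=> e f /(equivE_union_eq hA e f hI hI) /(union_eq_id (tame_systemE hA) hI).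
Qed.
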